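(* Let $\Sigma_A$ be a nonempty subshift of finite type on $M$ symbols with topological entropy $h$. Then $\Sigma_A$ contains a periodic orbit of period at most $1+M\,e^{1-h}$.
   Context: For a matrix $A\in\{0,1\}^{M\times M}$, $\Sigma_A=\{(x_i)_{i\in\mathbb Z}\in\{1,\dots,M\}^{\mathbb Z}: A(x_i,x_{i+1})=1\ \forall i\}$ with the shift $\sigma((x_i))_i=x_{i+1}$ and the product topology; $h$ is the topological entropy of $\sigma$ on $\Sigma_A$. *)

From HB Require Import structures.
From mathcomp Require Import all_boot all_order all_algebra.
From mathcomp Require Import boolp classical_sets reals topology normedtype sequences exp.
Set Implicit Arguments. Unset Strict Implicit. Unset Printing Implicit Defensive.
Import Order.TTheory GRing.Theory Num.Theory numFieldTopology.Exports numFieldNormedType.Exports.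
Local Open Scope ring_scope.
Local Open Scope classical_set_scope.

(* Symbols are 'I_M (= {1,...,M} shifted by one); points are maps int -> 'I_M. *)

Definition SFT (M : nat) (A : 'M[bool]_M) : set (int -> 'I_M) :=
  [set x | forall i : int, A (x i) (x (i + 1)) = true].

Definition sft_shift (M : nat) (x : int -> 'I_M) : int -> 'I_M := fun i => x (i + 1).

Definition lang (M : nat) (A : 'M[bool]_M) (n : nat) : {set {ffun 'I_n -> 'I_M}} :=
  [set w : {ffun 'I_n -> 'I_M} | `[< exists x, SFT A x /\ forall i : 'I_n, x (Posz (val i)) = w i >]].

Definition sft_entropy (R : realType) (M : nat) (A : 'M[bool]_M) : R :=
  limn (fun n : nat => ln (#|lang A n.+1|%:R : R) / (n.+1)%:R).

From HB Require Import structures.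
From mathcomp Require Import all_boot all_order all_algebra.
From mathcomp Require Import boolp classical_sets reals topology normedtype sequences exp.
From mathcomp Require Import zify ring.
Import Order.TTheory GRing.Theory Num.Theory numFieldTopology.Exports numFieldNormedType.Exports.
Local Open Scope ring_scope.
Local Open Scope classical_set_scope.

Set Implicit Arguments. Unset Strict Implicit. Unset Printing Implicit Defensive.

(** Let p be the least period of a periodic orbit and k = p - 1.  An allowed
   word of length k < p has no repeated symbol, since a repetition closes a
   loop shorter than p.  It is even determined by its set of symbols: list a
   second word with the same symbols in the order of the first one; a descent
   in this listing would again close a loop of length at most k.  Hence the
   number L_k of allowed k-words is at most C(M, k) <= (M e / k)^k.  As L_n is
   submultiplicative, h <= ln L_k / k, and therefore k <= M e^(1 - h). *)

Section Shift.

Variables (M : nat) (A : 'M[bool]_M).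

Lemma iter_sft_shift k (x : int -> 'I_M) :
  iter k (@sft_shift M) x = fun n => x (n + k%:Z).
Proof.
elim: k => [|k IH] /=; first by apply/funext => n; rewrite addr0.
rewrite IH /sft_shift; apply/funext => n; congr x.
by rewrite -addrA -[1]/(Posz 1) -PoszD add1n.
Qed.

Lemma SFT_succ x n : SFT A x -> A (x n%:Z) (x n.+1%:Z).
Proof. by move=> /(_ n%:Z); rewrite -[1]/(Posz 1) -PoszD addn1. Qed.

Definition has_period (p : nat) :=
  exists x, SFT A x /\ iter p (@sft_shift M) x = x.

Lemma has_period_cycle (c : nat -> 'I_M) (L : nat) :
  (0 < L)%N -> (forall t, (t < L)%N -> A (c t) (c t.+1)) -> c L = c 0 ->
  has_period L.
Proof.
move=> L_gt0 walk c_closed.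
have L_neq0 : Posz L != 0 by rewrite eqz_nat -lt0n.
exists (fun n : int => c (absz (n %% L)%Z)); split; last first.
  by rewrite iter_sft_shift; apply/funext => n; rewrite modzDr.
move=> i /=; set r := absz (i %% L)%Z.
have r_def : Posz r = (i %% L)%Z by rewrite gez0_abs // modz_ge0.
have r_lt : (r < L)%N by rewrite -ltz_nat r_def ltz_pmod.
have -> : absz ((i + 1) %% L)%Z = (r.+1 %% L)%N.
  by rewrite -modzDml -r_def -[1]/(Posz 1) -PoszD modz_nat addn1.
have [r1_lt | r1_eq] : (r.+1 < L)%N \/ r.+1 = L by lia.
- by rewrite modn_small // walk.
- by rewrite r1_eq modnn -c_closed -r1_eq walk.
Qed.

Lemma has_period_loop (g : nat -> 'I_M) i j :
  (i < j)%N -> (forall t, (i <= t)%N -> (t < j)%N -> A (g t) (g t.+1)) ->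
  g i = g j -> has_period (j - i).
Proof.
move=> ij walk g_ij; apply: (@has_period_cycle (fun t => g (i + t)%N)).
- by rewrite subn_gt0.
- by move=> t t_lt; rewrite addnS; apply: walk; lia.
- by rewrite addn0 subnKC ?g_ij // ltnW.
Qed.

Lemma has_period_repeat x i j :
  SFT A x -> (i < j)%N -> x i%:Z = x j%:Z -> has_period (j - i).
Proof.
move=> Sx ij e.
by apply: (@has_period_loop (fun n => x n%:Z)) => // t _ _; apply: SFT_succ.
Qed.

Lemma has_period_exists : SFT A !=set0 -> exists2 q, (0 < q)%N & has_period q.
Proof.
case=> x Sx; pose g (i : 'I_M.+1) := x (val i)%:Z.
have [/injectiveP g_inj | /injectivePn [i [j neq_ij g_ij]]] := boolP (injectiveb g).
  by have := leq_card _ g_inj; rewrite !card_ord ltnn.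
have [ij | ji] : (i < j)%N \/ (j < i)%N by move: neq_ij; rewrite neq_ltn => /orP.
- by exists (j - i)%N; [rewrite subn_gt0 | apply: has_period_repeat].
- by exists (i - j)%N; [rewrite subn_gt0 | apply: has_period_repeat].
Qed.

End Shift.

Section Language.

Variables (M : nat) (A : 'M[bool]_M).

Lemma langP n (w : {ffun 'I_n -> 'I_M}) :
  w \in lang A n <-> exists x, SFT A x /\ forall i : 'I_n, x (val i)%:Z = w i.
Proof. by rewrite inE; split => [/asboolP | H]; last apply/asboolP. Qed.

Lemma card_lang_gt0 n : SFT A !=set0 -> (0 < #|lang A n|)%N.
Proof.
case=> x Sx; apply/card_gt0P; exists [ffun i : 'I_n => x (val i)%:Z].
by apply/langP; exists x; split => // i; rewrite ffunE.
Qed.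

Lemma card_langD a b : (#|lang A (a + b)| <= #|lang A a| * #|lang A b|)%N.
Proof.
pose split_word (w : {ffun 'I_(a + b) -> 'I_M}) :=
  ([ffun i => w (lshift b i)], [ffun i => w (rshift a i)]).
have split_inj : injective split_word.
  move=> w w' [/ffunP e1 /ffunP e2]; apply/ffunP => i.
  case: (splitP i) => j ij.
  - by move: (e1 j); rewrite !ffunE (_ : i = lshift b j) //; apply: val_inj.
  - by move: (e2 j); rewrite !ffunE (_ : i = rshift a j) //; apply: val_inj.
rewrite -cardsX -(card_imset (lang A (a + b)) split_inj); apply: subset_leq_card.
apply/fintype.subsetP => _ /imsetP [w /langP [y [Sy yw]] ->].
rewrite inE; apply/andP; split; apply/langP.
- by exists y; split => // i; rewrite ffunE -yw.
- exists (fun n => y (n + a%:Z)); split.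
    by move=> n; have := Sy (n + a%:Z); rewrite addrAC.
  by move=> i; rewrite ffunE -yw /= -PoszD addnC.
Qed.

Lemma card_langM m k : (#|lang A (m * k)| <= #|lang A k| ^ m)%N.
Proof.
elim: m => [|m IH].
  by rewrite mul0n expn0 (leq_trans (max_card _)) // card_ffun !card_ord.
rewrite mulSn expnS (leq_trans (card_langD _ _)) //.
by rewrite leq_mul2l IH orbT.
Qed.

Lemma sft_entropy_le (R : realType) k : SFT A !=set0 -> (0 < k)%N ->
  sft_entropy R A <= ln (#|lang A k|%:R : R) / k%:R.
Proof.
move=> ne k_gt0; set B := ln _ / _.
pose u := fun n : nat => ln (#|lang A n.+1|%:R : R) / n.+1%:R.
have L_gt0 n : (0 : R) < #|lang A n|%:R by rewrite ltr0n card_lang_gt0.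
have u_le m : u (m.+1 * k).-1 <= B.
  rewrite /u prednK ?muln_gt0 //.
  apply: (@le_trans _ _ (ln ((#|lang A k| ^ m.+1)%:R : R) / (m.+1 * k)%:R)).
    rewrite ler_wpM2r ?invr_ge0 ?ler0n // ler_ln ?posrE ?L_gt0 ?ler_nat ?card_langM //.
    by rewrite ltr0n expn_gt0 card_lang_gt0.
  have k_neq0 : (k%:R : R) != 0 by rewrite pnatr_eq0 -lt0n.
  rewrite natrX lnXn ?L_gt0 // natrM [leLHS](_ : _ = B) //.
  by rewrite /B; field; rewrite k_neq0 /= addrC natr1 pnatr_eq0.
rewrite /sft_entropy -/u.
have [u_cvg | u_dvg] := pselect (cvgn u); last first.
  by rewrite (dvgP u_dvg) divr_ge0 ?ler0n // ln_ge0 // ler1n card_lang_gt0.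
rewrite leNgt; apply/negP => B_lt.
have [N _ u_gt] := cvgr_gt _ u_cvg _ B_lt.
have N_le : (N <= (N.+1 * k).-1)%N by have := leq_pmulr N.+1 k_gt0; lia.
by have := u_gt _ N_le; rewrite /= ltNge u_le.
Qed.

End Language.

Lemma increasing_bounded_id (F : nat -> nat) k :
  (forall n, (n.+1 < k)%N -> (F n < F n.+1)%N) ->
  (forall n, (n < k)%N -> (F n < k)%N) ->
  forall n, (n < k)%N -> F n = n.
Proof.
move=> F_incr F_lt.
have F_shift m n : (n + m < k)%N -> (F n + m <= F (n + m))%N.
  elim: m => [|m IH] lt_nm; first by rewrite !addn0.
  have := IH ltac:(lia); have := F_incr (n + m)%N ltac:(lia); rewrite !addnS; lia.
move=> n n_lt.
have := F_shift n 0%N ltac:(lia); have := F_shift (k.-1 - n)%N n ltac:(lia).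
have := F_lt (n + (k.-1 - n))%N ltac:(lia); rewrite add0n; lia.
Qed.

Section MinimalPeriod.

Variables (M : nat) (A : 'M[bool]_M) (p k : nat).
Hypothesis p_min : forall q, (0 < q)%N -> has_period A q -> (p <= q)%N.
Hypothesis k_lt_p : (k < p)%N.

Lemma lang_injective w : w \in lang A k -> injective w.
Proof.
move=> /langP [y [Sy yw]].
have no_repeat (i j : 'I_k) : (i < j)%N -> w i = w j -> False.
  move=> ij e.
  have ij_per : has_period A (j - i) by apply: (has_period_repeat Sy ij); rewrite !yw.
  by have := p_min _ ij_per; rewrite subn_gt0 => /(_ ij); have := ltn_ord j; lia.
move=> i j e; apply: val_inj; have [ij | ji | //] := ltngtP i j.
- by case: (no_repeat _ _ ij e).
- by case: (no_repeat _ _ ji (esym e)).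
Qed.

Lemma lang_image_inj :
  {in lang A k &, injective (fun w : {ffun 'I_k -> 'I_M} => w @: [set: 'I_k]%SET)}.
Proof.
move=> w w' /langP [y [Sy yw]] /langP [y' [Sy' y'w']] /= same_image.
have [k0 | k_gt0] := posnP k.
  by apply/ffunP => i; have := ltn_ord i; lia.
have /choice [f wf] : forall t, exists s, w s = w' t.
  move=> t; have : w' t \in w @: [set: 'I_k]%SET by rewrite same_image imset_f ?inE.
  by case/imsetP => s _ ->; exists s.
pose F n := val (f (insubd (Ordinal k_gt0) n)).
have yF n : (n < k)%N -> y (F n)%:Z = y' n%:Z.
  move=> n_lt; have s_val : val (insubd (Ordinal k_gt0) n) = n by rewrite val_insubd n_lt.
  by rewrite /F yw wf -y'w' s_val.
have F_lt n : (n < k)%N -> (F n < k)%N by move=> _; apply: ltn_ord.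
(* A descent F n.+1 <= F n closes the loop y (F n.+1) -> ... -> y (F n) = y' n
   -> y' n.+1 = y (F n.+1), of length at most k. *)
have F_incr n : (n.+1 < k)%N -> (F n < F n.+1)%N.
  move=> n_lt; rewrite ltnNge; apply/negP => F_le.
  set a := F n.+1 in F_le *; set b := F n in F_le *.
  pose g s := if (s <= b)%N then y s%:Z else y a%:Z.
  have : has_period A (b.+1 - a).
    apply: (@has_period_loop _ A g a b.+1) => [|t _ t_lt|]; rewrite /g ?F_le ?ltnn //.
    have [t_ltb | ->] : (t < b)%N \/ t = b by lia.
    - by rewrite (ltnW t_ltb) t_ltb; apply: SFT_succ.
    - by rewrite leqnn ltnn /a /b yF ?yF //; [apply: SFT_succ | apply: ltnW].
  move=> /(p_min _); have := F_lt n (ltnW n_lt); lia.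
have F_id := increasing_bounded_id F_incr F_lt.
by apply/ffunP => i; rewrite -yw -y'w' -yF ?F_id ?ltn_ord.
Qed.

Lemma card_lang_le_bin : (#|lang A k| <= 'C(M, k))%N.
Proof.
rewrite -(card_in_imset (f := fun w : {ffun 'I_k -> 'I_M} => w @: [set: 'I_k]%SET));
  last exact: lang_image_inj.
rewrite -[X in 'C(X, _)]card_ord -card_draws.
apply: subset_leq_card; apply/fintype.subsetP => _ /imsetP [w wL ->].
by rewrite inE card_imset ?cardsT ?card_ord //; apply: lang_injective.
Qed.

End MinimalPeriod.

Lemma exp_coeff_le_expR (R : realType) (x : R) n : 0 <= x -> exp_coeff x n <= expR x.
Proof.
move=> x_ge0.
have coeff_ge0 m : 0 <= exp_coeff x m by apply: exp_coeff_ge0.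
have series_incr : {homo series (exp_coeff x) : m n / (m <= n)%N >-> m <= n}.
  by apply: nondecreasing_series => m _ _.
apply: le_trans (nondecreasing_cvgn_le series_incr (is_cvg_series_exp_coeff x) n.+1).
rewrite -[X in X <= _](seriesSB _ n) lerBlDr lerDl /series /=.
by apply: sumr_ge0 => m _.
Qed.

Lemma ffact_le_expn n k : (n ^_ k <= n ^ k)%N.
Proof.
elim: k => [|k IH] //.
by rewrite ffactnSr expnSr leq_mul // leq_subr.
Qed.

Lemma bin_natr_exp_le (R : realType) M k :
  ('C(M, k)%:R * k%:R ^+ k : R) <= (M%:R * expR 1) ^+ k.
Proof.
have k_pow : (k%:R ^+ k : R) <= expR 1 ^+ k * k`!%:R.
  have := exp_coeff_le_expR k (ler0n R k).
  by rewrite exp_coeffE /= -expRM_natl mulr1 mulrC -ler_pdivrMr ?ltr0n ?fact_gt0.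
apply: le_trans (_ : 'C(M, k)%:R * (expR 1 ^+ k * k`!%:R) <= _).
  by rewrite ler_wpM2l ?ler0n.
rewrite mulrCA -natrM bin_ffact exprMn [leRHS]mulrC ler_wpM2l ?exprn_ge0 ?expR_ge0 //.
by rewrite -natrX ler_nat ffact_le_expn.
Qed.

Lemma le_mul_expR1B (R : realType) (k M L : nat) (h : R) : (0 < k)%N -> (0 < L)%N ->
  (L%:R * k%:R ^+ k : R) <= (M%:R * expR 1) ^+ k -> h <= ln (L%:R : R) / k%:R ->
  (k%:R : R) <= M%:R * expR (1 - h).
Proof.
move=> k_gt0 L_gt0 L_le h_le.
set c := expR (ln (L%:R : R) / k%:R).
have ck : c ^+ k = L%:R.
  by rewrite /c -expRM_natl mulrC divfK ?pnatr_eq0 -?lt0n // lnK // posrE ltr0n.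
have kc_le : k%:R * c <= M%:R * expR 1.
  rewrite -(ler_pXn2r k_gt0) ?nnegrE ?mulr_ge0 ?ler0n ?expR_ge0 //.
  by rewrite exprMn ck mulrC.
rewrite expRD expRN mulrA ler_pdivlMr ?expR_gt0 // (le_trans _ kc_le) //.
by rewrite ler_wpM2l ?ler0n // ler_expR.
Qed.

Unset Implicit Arguments.

Theorem mainTheorem8 (R : realType) (M : nat) (A : 'M[bool]_M) :
  SFT A !=set0 ->
  exists (x : int -> 'I_M) (p : nat),
    SFT A x /\ (0 < p)%N /\ iter p (@sft_shift M) x = x /\
    ((p%:R : R) <= 1 + (M%:R : R) * expR (1 - sft_entropy R A)).
Proof.
move=> ne.
have [q q_gt0 q_per] := has_period_exists ne.
have ex_p : exists p, (0 < p)%N && `[< has_period A p >].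
  by exists q; rewrite q_gt0; apply/asboolP.
case: (ex_minnP ex_p) => p /andP[p_gt0 /asboolP [x [Sx x_per]]] p_min.
exists x, p; do 3 split => //.
have {}p_min q' : (0 < q')%N -> has_period A q' -> (p <= q')%N.
  by move=> q'_gt0 q'_per; apply: p_min; rewrite q'_gt0; apply/asboolP.
case: p p_gt0 p_min {x_per} => // k _ p_min.
rewrite -natr1 addrC lerD2l.
have [-> | k_gt0] := posnP k; first by rewrite mulr_ge0 ?ler0n ?expR_ge0.
apply: le_mul_expR1B k_gt0 (card_lang_gt0 k ne) _ (sft_entropy_le R ne k_gt0).
apply: le_trans (bin_natr_exp_le R M k).
by rewrite ler_wpM2r ?exprn_ge0 ?ler0n // ler_nat (card_lang_le_bin p_min).
Qed.
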